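(* Let $n\geq2$, $R_m,k>0$, $0\leq\alpha\leq1$. Let $\Omega\subset\mathbb{R}^n$ be a bounded Lipschitz domain of diameter at most $R_m$ whose complement is connected. Consider a source $\chi_\Omega\varphi$ with $\varphi\in C^\alpha(\overline\Omega)$. If the source is radiationless at wavenumber $k$, then there exists a positive constant $C$, depending only on $k,R_m,n$, such that \[ \big(\operatorname{diam}(\Omega)\big)^\alpha\geq C\,\frac{\sup_{\partial\Omega}|\varphi|}{\|\varphi\|_{C^\alpha(\overline\Omega)}}. \]
   Context: Source scattering: for $f=\chi_\Omega\varphi$ and $k>0$, let $u\in H^2_{loc}(\mathbb{R}^n)$ be the unique solution of $(\Delta+k^2)u=f$ satisfying the Sommerfeld radiation condition $\lim_{r\to\infty}r^{(n-1)/2}(\partial_r-ik)u=0$. Its far-field pattern is $u_\infty(\hat x)=C_{n,k}\int e^{-ik\hat x\cdot y}f(y)\,dy$, $\hat x\in\mathbb{S}^{n-1}$, with $C_{n,k}\neq0$ explicit (the leading coefficient in $u(x)\sim\frac{e^{ik|x|}}{|x|^{(n-1)/2}}u_\infty(x/|x|)$). The source is radiationless if $u_\infty\equiv0$. Standing assumption: bounded domains satisfy $H^2_0(\Omega)=\{u|_\Omega: u\in H^2(\mathbb{R}^n),\ u=0 \text{ in } \mathbb{R}^n\setminus\overline\Omega\}$. *)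

From HB Require Import structures.
From mathcomp Require Import all_boot all_order all_algebra.
From mathcomp Require Import all_classical all_reals all_analysis.
From mathcomp Require Import complex.
Set Implicit Arguments. Unset Strict Implicit. Unset Printing Implicit Defensive.
Import Order.TTheory GRing.Theory Num.Theory.
Import numFieldNormedType.Exports.
Local Open Scope classical_set_scope.
Local Open Scope ring_scope.

Section Defs.
Variable R : realType.

Definition dotv (n : nat) (x y : 'rV[R]_n) : R := \sum_(i < n) x ord0 i * y ord0 i.
Definition enorm (n : nat) (x : 'rV[R]_n) : R := Num.sqrt (dotv x x).
Definition eball (n : nat) (p : 'rV[R]_n) (r : R) : set 'rV[R]_n :=
  [set x | enorm (x - p) < r].

Definition diam (n : nat) (A : set 'rV[R]_n) : R :=
  sup [set enorm (x - y) | x in A & y in A].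

Definition cabs (z : R[i]) : R := Num.sqrt (complex.Re z ^+ 2 + complex.Im z ^+ 2).

(* Omega is locally (near each boundary point) the subgraph of a Lipschitz
   function over a hyperplane: there are a Euclidean unit vector e (the local
   "vertical" direction, i.e. a rotation of coordinates), a radius r > 0 and a
   Lipschitz function g, constant along e (so g is a function on the
   hyperplane e^perp), such that within the ball B(p,r), x is in Omega iff
   x.e < g(x). *)
Definition lipschitz_boundary (n : nat) (Om : set 'rV[R]_n) : Prop :=
  forall p, closure Om p -> ~ Om p ->
    exists (r L : R) (e : 'rV[R]_n) (g : 'rV[R]_n -> R),
      [/\ 0 < r, 0 <= L, enorm e = 1,
          (forall x y, `|g x - g y| <= L * enorm (x - y)) /\
          (forall x t, g (x + t *: e) = g x) &
          (forall x, eball p r x -> (Om x <-> dotv x e < g x))].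

Definition bounded_lipschitz_domain (n : nat) (Om : set 'rV[R]_n) : Prop :=
  [/\ open Om, connected Om, Om !=set0,
      (exists M : R, forall x, Om x -> enorm x <= M) &
      lipschitz_boundary Om].

Definition sup_abs (n : nat) (A : set 'rV[R]_n) (phi : 'rV[R]_n -> R[i]) : R :=
  sup [set cabs (phi x) | x in A].

Definition holder_quotients (n : nat) (alpha : R) (A : set 'rV[R]_n)
    (phi : 'rV[R]_n -> R[i]) : set R :=
  [set q | exists x y, [/\ A x, A y, x <> y &
            q = cabs (phi x - phi y) / (enorm (x - y)) `^ alpha]].

Definition holder_seminorm (n : nat) (alpha : R) (A : set 'rV[R]_n)
    (phi : 'rV[R]_n -> R[i]) : R :=
  sup (holder_quotients alpha A phi).

Definition holder_norm (n : nat) (alpha : R) (A : set 'rV[R]_n)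
    (phi : 'rV[R]_n -> R[i]) : R :=
  sup_abs A phi + holder_seminorm alpha A phi.

Definition in_holder (n : nat) (alpha : R) (A : set 'rV[R]_n)
    (phi : 'rV[R]_n -> R[i]) : Prop :=
  [/\ (forall x, A x -> forall eps : R, 0 < eps -> exists2 d : R, 0 < d &
          forall y, A y -> enorm (y - x) < d -> cabs (phi y - phi x) < eps),
      has_ubound [set cabs (phi x) | x in A] &
      has_ubound (holder_quotients alpha A phi)].

Definition cons_row (n : nat) (t : R) (v : 'rV[R]_n) : 'rV[R]_n.+1 :=
  \row_(i < n.+1) match unlift ord0 i with Some j => v ord0 j | None => t end.

(* Lebesgue integral over R^n, computed as the iterated one-dimensional
   Lebesgue integral (Fubini). *)
Fixpoint iint (n : nat) : ('rV[R]_n -> R) -> R :=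
  match n with
  | 0 => fun f => f 0
  | m.+1 => fun f =>
      Rintegral (@lebesgue_measure R) setT (fun t => iint (fun v => f (cons_row t v)))
  end.

Definition ciint (n : nat) (f : 'rV[R]_n -> R[i]) : R[i] :=
  ((iint (fun y => complex.Re (f y)))%:C + 'i * (iint (fun y => complex.Im (f y)))%:C)%C.

Definition expi (t : R) : R[i] := ((cos t)%:C + 'i * (sin t)%:C)%C.

Definition Cnk (n : nat) (k : R) : R[i] :=
  (- expi (pi * (3 - n%:R) / 4)
   * ((k `^ ((n%:R - 3) / 2)) / (2 * (2 * pi) `^ ((n%:R - 1) / 2)))%:C)%C.

Definition source (n : nat) (Om : set 'rV[R]_n) (phi : 'rV[R]_n -> R[i])
  (y : 'rV[R]_n) : R[i] := if `[< Om y >] then phi y else 0.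

Definition farfield (n : nat) (k : R) (Om : set 'rV[R]_n)
    (phi : 'rV[R]_n -> R[i]) (xhat : 'rV[R]_n) : R[i] :=
  Cnk n k * ciint (fun y => expi (- (k * dotv xhat y)) * source Om phi y).

Definition radiationless (n : nat) (k : R) (Om : set 'rV[R]_n)
    (phi : 'rV[R]_n -> R[i]) : Prop :=
  forall xhat : 'rV[R]_n, enorm xhat = 1 -> farfield k Om phi xhat = 0.

End Defs.

From HB Require Import structures.
From mathcomp Require Import all_boot all_order all_algebra.
From mathcomp Require Import all_classical all_reals all_analysis.
From mathcomp Require Import complex.
From mathcomp Require Import ring lra.
Import Order.TTheory GRing.Theory Num.Theory.
Import numFieldNormedType.Exports.
Local Open Scope classical_set_scope.
Local Open Scope ring_scope.

Set Implicit Arguments.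
Unset Strict Implicit.
Unset Printing Implicit Defensive.

(* Radiationlessness in the coordinate direction e_i says that
   F(y) = e^{-i k y_i} chi_Omega(y) phi(y) has integral zero.  A real function
   with zero integral, supported in Omega, cannot keep a strict sign on Omega,
   so for x in Omega both |Re F(x)| and |Im F(x)| are bounded by the
   oscillation of F on Omega, which is at most
   [phi]_alpha diam^alpha + 2 k diam |phi(x)|.  Hence
   |phi(x)| <= 2 [phi]_alpha diam^alpha + 4 k diam |phi(x)|, and when
   16 k diam <= 1 this gives |phi| <= 8 [phi]_alpha diam^alpha on Omega, and by
   continuity on its closure, boundary included.  When 16 k diam > 1,
   diam^alpha >= min(1, 1/(16k)) and the trivial bound
   sup_{boundary} |phi| <= ||phi||_{C^alpha} suffices, so
   C = min(1/8, 1/(16k)) works. *)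

Section integral_bounds.
Variable R : realType.
Local Notation mu := (@lebesgue_measure R).

(* No measurability is needed: both integrals are suprema over the simple
   functions below the integrand. *)
Lemma ge0_le_integralT d (T : measurableType d) (m : {measure set T -> \bar R})
    (f g : T -> \bar R) :
  (forall x, (0 <= f x <= g x)%E) -> (\int[m]_x f x <= \int[m]_x g x)%E.
Proof.
move=> fg; have f0 x : (0 <= f x)%E by case/andP: (fg x).
have g0 x : (0 <= g x)%E by case/andP: (fg x) => /le_trans; apply.
rewrite !ge0_integralTE //; apply: ereal_sup_le => _ [h hf <-].
exists h => //= x; apply: le_trans (hf x) _; by case/andP: (fg x).
Qed.

Lemma integral_cst_itv (c a b : R) (b0 b1 : bool) : a <= b ->
  (\int[mu]_(x in [set` Interval (BSide b0 a) (BSide b1 b)]) (cst c%:E) x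
    = (c * (b - a))%:E)%E.
Proof.
move=> ab; rewrite integral_cst; last exact: measurable_itv.
rewrite -[X in (_ * X)%E]/(mu [set` Interval (BSide b0 a) (BSide b1 b)]).
rewrite lebesgue_measure_itv lte_fin; have [ltab|] := ltP a b.
  by rewrite -EFinD -EFinM.
move=> ba; have -> : b = a by apply/eqP; rewrite eq_le ab ba.
by rewrite subrr mulr0 mule0.
Qed.

Lemma ge0_integral_le_box (G : R -> R) (K B : R) : 0 <= B ->
  (forall t, 0 <= G t <= K) -> (forall t, B < `|t| -> G t = 0) ->
  (\int[mu]_x (G x)%:E <= (K * (B *+ 2))%:E)%E.
Proof.
move=> B0 GK Gout.
have -> : (K * (B *+ 2))%:E = (\int[mu]_(x in `[(- B)%R, B]) (cst K%:E) x)%E.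
  by rewrite integral_cst_itv ?opprK -?mulr2n //; lra.
rewrite [X in (_ <= X)%E]integral_mkcond; apply: ge0_le_integralT => x.
rewrite /patch /=; case: ifPn => [_|]; first by rewrite !lee_fin; exact: GK.
rewrite notin_setE /= in_itv /= -ler_norml => /negP; rewrite -ltNge => Bx.
by rewrite Gout // lexx.
Qed.

Lemma ge0_integral_ge_itv (G : R -> R) (c a r : R) : 0 <= r -> 0 <= c ->
  (forall t, 0 <= G t) -> (forall t, `|t - a| < r -> c <= G t) ->
  ((c * (r *+ 2))%:E <= \int[mu]_x (G x)%:E)%E.
Proof.
move=> r0 c0 G0 Gc.
have -> : (c * (r *+ 2))%:E = (\int[mu]_(x in `](a - r)%R, (a + r)%R[) (cst c%:E) x)%E.
  by rewrite integral_cst_itv; [congr (_ * _)%:E | ]; lra.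
rewrite [X in (X <= _)%E]integral_mkcond; apply: ge0_le_integralT => x.
rewrite /patch /=; case: ifPn => [|_]; last by rewrite lexx lee_fin G0.
rewrite in_setE /= in_itv /= -ltr_distlC distrC => /Gc cG.
by rewrite !lee_fin c0 cG.
Qed.

Lemma Rintegral_bounds (G : R -> R) (K B c a r : R) : 0 <= B -> 0 <= r -> 0 <= c ->
  (forall t, 0 <= G t <= K) -> (forall t, B < `|t| -> G t = 0) ->
  (forall t, `|t - a| < r -> c <= G t) ->
  c * (r *+ 2) <= Rintegral mu setT G <= K * (B *+ 2).
Proof.
move=> B0 r0 c0 GK Gout Gc.
have G0 t : 0 <= G t by case/andP: (GK t).
have up := ge0_integral_le_box B0 GK Gout.
have lo := ge0_integral_ge_itv r0 c0 G0 Gc.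
have fin : (\int[mu]_x (G x)%:E)%E \is a fin_num.
  rewrite ge0_fin_numE ?(le_lt_trans up) ?ltry //.
  by apply: integral_ge0 => x _; rewrite lee_fin.
by rewrite /Rintegral -!lee_fin fineK // lo up.
Qed.

Lemma RintegralNT d (T : measurableType d) (m : {measure set T -> \bar R})
    (G : T -> R) :
  Rintegral m setT (fun t => - G t) = - Rintegral m setT G.
Proof.
rewrite /Rintegral [in LHS]integralE [in RHS]integralE.
have -> : ((fun x => (- G x)%:E)^\+ = (fun x => (G x)%:E)^\-)%E.
  by apply/funext => x; rewrite funeposE funenegE /= ?EFinN ?oppeK.
have -> : ((fun x => (- G x)%:E)^\- = (fun x => (G x)%:E)^\+)%E.
  by apply/funext => x; rewrite funeposE funenegE /= ?EFinN ?oppeK.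
have fineBN (a b : \bar R) : (0 <= a)%E -> (0 <= b)%E ->
    fine (b - a)%E = - fine (a - b)%E.
  by case: a b => [a||] [b||] //= _ _; rewrite ?oppr0 // opprB.
by apply: fineBN; apply: integral_ge0 => x _; [exact: funepos_ge0 | exact: funeneg_ge0].
Qed.

End integral_bounds.

Section iterated_integral.
Variable R : realType.

Lemma cons_row0 n (t : R) (v : 'rV[R]_n) : cons_row t v ord0 ord0 = t.
Proof. by rewrite /cons_row mxE unlift_none. Qed.

Lemma cons_rowS n (t : R) (v : 'rV[R]_n) i : cons_row t v ord0 (lift ord0 i) = v ord0 i.
Proof. by rewrite /cons_row mxE liftK. Qed.

Lemma iint0 n : iint (fun _ : 'rV[R]_n => 0) = 0.
Proof.
elim: n => [|n IH] //=; under eq_fun => t do rewrite IH.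
by rewrite Rintegral_cst // mul0r.
Qed.

Lemma iintN n (f : 'rV[R]_n -> R) : iint (fun y => - f y) = - iint f.
Proof.
elim: n f => [|n IH] f //=; under eq_fun => t do rewrite IH.
exact: RintegralNT.
Qed.

Lemma iint_bounds n (f : 'rV[R]_n -> R) (M B c r : R) (p : 'rV[R]_n) :
  0 <= B -> 0 <= r -> 0 <= c ->
  (forall y, 0 <= f y <= M) ->
  (forall y : 'rV_n, (exists i, B < `|y ord0 i|) -> f y = 0) ->
  (forall y : 'rV_n, (forall i, `|y ord0 i - p ord0 i| < r) -> c <= f y) ->
  c * (r *+ 2) ^+ n <= iint f <= M * (B *+ 2) ^+ n.
Proof.
elim: n f M B c r p => [|n IH] f M B c r p B0 r0 c0 fM fout fc.
  by rewrite /= !expr0 !mulr1 (proj2 (andP (fM 0))) andbT; apply: fc => -[].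
rewrite /= !exprS (mulrC (r *+ 2)) (mulrC (B *+ 2)) !mulrA.
have slice_out (t : R) (y : 'rV_n) :
    (exists i, B < `|y ord0 i|) -> f (cons_row t y) = 0.
  by case=> i Byi; apply: fout; exists (lift ord0 i); rewrite cons_rowS.
have slice0 (t : R) (y : 'rV_n) : 0 <= f (cons_row t y) by case/andP: (fM (cons_row t y)).
apply: (Rintegral_bounds (a := p ord0 ord0)) => //.
- by rewrite mulr_ge0 ?exprn_ge0 ?mulrn_wge0.
- move=> t; have /andP[lo up] := IH _ M B 0 0 0 B0 (lexx 0) (lexx 0)
    (fun y => fM (cons_row t y)) (slice_out t)
    (fun y _ => slice0 t y).
  by rewrite mul0r in lo; rewrite lo.
- move=> t Bt; have -> : (fun v => f (cons_row t v)) = fun _ => 0.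
    by apply/funext => y; apply: fout; exists ord0; rewrite cons_row0.
  exact: iint0.
- move=> t ht; pose q : 'rV_n := \row_j p ord0 (lift ord0 j).
  have slice_c (y : 'rV_n) :
      (forall i, `|y ord0 i - q ord0 i| < r) -> c <= f (cons_row t y).
    move=> hy; apply: fc => i; case: (unliftP ord0 i) => [j ->|->].
      by rewrite cons_rowS; have := hy j; rewrite /q mxE.
    by rewrite cons_row0.
  by case/andP: (IH _ M B c r q B0 r0 c0 (fun y => fM _) (slice_out t) slice_c).
Qed.

End iterated_integral.

Section euclidean.
Variable R : realType.

Lemma enorm_ge0 n (v : 'rV[R]_n) : 0 <= enorm v.
Proof. exact: sqrtr_ge0. Qed.

Lemma coord_le_enorm n (v : 'rV[R]_n) i : `|v ord0 i| <= enorm v.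
Proof.
have sq0 (j : 'I_n) : 0 <= v ord0 j * v ord0 j by rewrite -expr2 sqr_ge0.
rewrite /enorm /dotv -sqrtr_sqr ler_sqrt ?sumr_ge0 //.
by rewrite (bigD1 i) //= expr2 lerDl sumr_ge0.
Qed.

Lemma enorm_le_cube n (v : 'rV[R]_n) (r : R) : 0 <= r ->
  (forall i, `|v ord0 i| <= r) -> enorm v <= r *+ n.
Proof.
move=> r0 vr; rewrite /enorm -(ger0_norm (mulrn_wge0 n r0)) -sqrtr_sqr.
rewrite ler_sqrt ?sqr_ge0 // exprMn_n /dotv.
apply: (@le_trans _ _ (\sum_(i < n) r ^+ 2)).
  apply: ler_sum => i _; apply: le_trans (ler_norm _) _.
  by rewrite normrM expr2 ler_pM.
rewrite sumr_const card_ord; apply: ler_wpMn2l; rewrite ?sqr_ge0 //.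
by case: (n) => // m; rewrite expnS expn1 leq_pmulr.
Qed.

Lemma enorm_eq0 n (v : 'rV[R]_n) : enorm v = 0 -> v = 0.
Proof.
move=> v0; apply/matrixP => i j; rewrite (ord1 i) mxE; apply/normr0_eq0.
by apply/eqP; rewrite eq_le normr_ge0 andbT -v0 coord_le_enorm.
Qed.

Lemma dotv_delta n (i : 'I_n) (y : 'rV[R]_n) : dotv (delta_mx ord0 i) y = y ord0 i.
Proof.
rewrite /dotv (bigD1 i) //= big1 ?addr0; first by rewrite mxE !eqxx mul1r.
by move=> j /negbTE ji; rewrite mxE ji andbF mul0r.
Qed.

Lemma enorm_delta n (i : 'I_n) : enorm (delta_mx ord0 i : 'rV[R]_n) = 1.
Proof. by rewrite /enorm dotv_delta mxE !eqxx sqrtr1. Qed.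

Lemma enorm_sub_le_diam n (Om : set 'rV[R]_n) (M : R) :
  (forall x, Om x -> enorm x <= M) ->
  forall x y, Om x -> Om y -> enorm (x - y) <= diam Om.
Proof.
move=> OmM x y Ox Oy; apply: ub_le_sup; last by exists x => //; exists y.
have M0 : 0 <= M by apply: le_trans (OmM _ Ox); exact: enorm_ge0.
exists ((M *+ 2) *+ n) => _ [a Oa [b Ob <-]].
apply: enorm_le_cube; rewrite ?mulrn_wge0 // => i; rewrite !mxE mulr2n.
apply: le_trans (ler_normB _ _) _; apply: lerD.
  exact: le_trans (coord_le_enorm _ _) (OmM _ Oa).
exact: le_trans (coord_le_enorm _ _) (OmM _ Ob).
Qed.

End euclidean.

Section complex_modulus.
Variable R : realType.

Lemma cabsE (z : R[i]) : cabs z = ComplexField.Normc.normc z.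
Proof. by case: z. Qed.

Lemma cabs_ge0 (z : R[i]) : 0 <= cabs z.
Proof. exact: sqrtr_ge0. Qed.

Lemma cabs0 : cabs (0 : R[i]) = 0.
Proof. by rewrite /cabs /= expr0n addr0 sqrtr0. Qed.

Lemma ler_cabsD (z w : R[i]) : cabs (z + w) <= cabs z + cabs w.
Proof. by rewrite !cabsE le_normcD. Qed.

Lemma cabsM (z w : R[i]) : cabs (z * w) = cabs z * cabs w.
Proof. by rewrite !cabsE ComplexField.Normc.normcM. Qed.

Lemma Re_le_cabs (z : R[i]) : `|complex.Re z| <= cabs z.
Proof. by rewrite /cabs -sqrtr_sqr ler_sqrt ?addr_ge0 ?sqr_ge0 // lerDl sqr_ge0. Qed.

Lemma Im_le_cabs (z : R[i]) : `|complex.Im z| <= cabs z.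
Proof. by rewrite /cabs -sqrtr_sqr ler_sqrt ?addr_ge0 ?sqr_ge0 // lerDr sqr_ge0. Qed.

Lemma cabs_le_ReIm (z : R[i]) : cabs z <= `|complex.Re z| + `|complex.Im z|.
Proof.
rewrite /cabs -(ger0_norm (addr_ge0 (normr_ge0 _) (normr_ge0 _))) -sqrtr_sqr.
rewrite ler_sqrt ?sqr_ge0 // -[complex.Re z ^+ 2]real_normK ?num_real //.
rewrite -[complex.Im z ^+ 2]real_normK ?num_real //.
have := normr_ge0 (complex.Re z); have := normr_ge0 (complex.Im z); nra.
Qed.

Lemma ReB (a b : R[i]) : complex.Re (a - b) = complex.Re a - complex.Re b.
Proof. by case: a; case: b. Qed.

Lemma ImB (a b : R[i]) : complex.Im (a - b) = complex.Im a - complex.Im b.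
Proof. by case: a; case: b. Qed.

Lemma ler_dist_derive (f df : R -> R) (L : R) : continuous f ->
  (forall x : R, is_derive x (1 : R) f (df x)) -> (forall x, `|df x| <= L) ->
  forall a b, `|f b - f a| <= L * `|b - a|.
Proof.
move=> fc fd dfL.
suff le_ab a b : a <= b -> `|f b - f a| <= L * `|b - a|.
  move=> a b; case: (leP a b) => [|/ltW]; first exact: le_ab.
  by rewrite distrC (distrC b); exact: le_ab.
move=> ab; have [c _ ->] := MVT_segment ab (fun x _ => fd x) (continuous_subspaceT fc).
by rewrite normrM ler_wpM2r.
Qed.

Lemma cabs_expi (t : R) : cabs (expi t) = 1.
Proof.
rewrite /cabs /expi /= !mul0r !mul1r ?mulr0 ?subr0 ?add0r ?addr0 ?subrr ?addr0.
by rewrite cos2Dsin2 sqrtr1.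
Qed.

Lemma expi_neq0 (t : R) : expi t != 0.
Proof.
by apply/eqP => t0; have := cabs_expi t; rewrite t0 cabs0 => /eqP; rewrite eq_sym oner_eq0.
Qed.

Lemma cabs_expiB (a b : R) : cabs (expi a - expi b) <= `|a - b| *+ 2.
Proof.
apply: le_trans (cabs_le_ReIm _) _.
rewrite /expi /= !mul0r !mul1r ?mulr0 ?subr0 ?add0r ?addr0 mulr2n.
apply: lerD; rewrite -[`|a - b|]mul1r.
  apply: (@ler_dist_derive _ (fun x => - sin x)) => [|x].
    exact: continuous_cos.
  by rewrite normrN sin_max.
by apply: (@ler_dist_derive _ cos) => //; [exact: continuous_sin | exact: cos_max].
Qed.

Lemma Cnk_neq0 n (k : R) : 0 < k -> Cnk n k != 0.
Proof.
move=> k0; rewrite /Cnk mulf_neq0 ?oppr_eq0 ?expi_neq0 //.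
apply/eqP => /(congr1 (@complex.Re R)) /= /eqP; apply/negP; rewrite gt_eqF //.
by rewrite divr_gt0 ?powR_gt0 // mulr_gt0 ?powR_gt0 // mulr_gt0 ?pi_gt0.
Qed.

End complex_modulus.

Section positive_integrals.
Variable R : realType.

Lemma iint_gt0 n (Om : set 'rV[R]_n) (F : 'rV[R]_n -> R) (M K c : R) x0 :
  open Om -> Om x0 -> (forall x, Om x -> enorm x <= M) -> 0 < c ->
  (forall y, ~ Om y -> F y = 0) -> (forall y, Om y -> c <= F y <= K) ->
  0 < iint F.
Proof.
move=> oOm Ox0 OmM c0 Fout FcK.
have M0 : 0 <= M by apply: le_trans (OmM _ Ox0); exact: enorm_ge0.
have /nbhs_ballP[r r0 rOm] := oOm x0 Ox0.
have cube (y : 'rV_n) : (forall i, `|y ord0 i - x0 ord0 i| < r) -> Om y.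
  by move=> hy; apply: rOm; split => // i j; rewrite (ord1 i); have := hy j; rewrite distrC.
have F0K (y : 'rV_n) : 0 <= F y <= K.
  case: (pselect (Om y)) => [/FcK|/Fout ->]; first by case/andP=> /(le_trans (ltW c0)) ->.
  by case/andP: (FcK _ Ox0) => cF FK; rewrite lexx (le_trans (ltW c0)) ?(le_trans cF).
have Fsupp (y : 'rV_n) : (exists i, M < `|y ord0 i|) -> F y = 0.
  case=> i Myi; apply: Fout => Oy.
  by have := le_trans (coord_le_enorm y i) (OmM _ Oy); rewrite leNgt Myi.
have Fc (y : 'rV_n) : (forall i, `|y ord0 i - x0 ord0 i| < r) -> c <= F y.
  by move/cube/FcK/andP => [].
have /andP[+ _] := iint_bounds M0 (ltW r0) (ltW c0) F0K Fsupp Fc.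
by apply: lt_le_trans; rewrite mulr_gt0 // exprn_gt0 // pmulrn_lgt0.
Qed.

Lemma iint_eq0_le_osc n (Om : set 'rV[R]_n) (u : 'rV[R]_n -> R) (M K E : R) x0 :
  open Om -> Om x0 -> (forall x, Om x -> enorm x <= M) ->
  iint u = 0 -> (forall y, ~ Om y -> u y = 0) -> (forall y, Om y -> `|u y| <= K) ->
  (forall y, Om y -> `|u y - u x0| <= E) -> `|u x0| <= E.
Proof.
move=> oOm Ox0 OmM u0 uout uK uE; rewrite leNgt; apply/negP => Eu.
have E0 : 0 <= E by apply: le_trans (uE _ Ox0); rewrite subrr normr0.
case: (leP 0 (u x0)) => ux0; [rewrite ger0_norm // in Eu | rewrite ltr0_norm // in Eu].
  suff : 0 < iint u by rewrite u0 ltxx.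
  apply: (iint_gt0 (K := K) (c := u x0 - E) oOm Ox0 OmM) => //; first lra.
  move=> y Oy; move: (uE _ Oy) (uK _ Oy); rewrite !ler_norml => /andP[? ?] /andP[? ?].
  by apply/andP; split; lra.
suff : 0 < iint (fun y => - u y) by rewrite iintN u0 oppr0 ltxx.
apply: (iint_gt0 (K := K) (c := - u x0 - E) oOm Ox0 OmM); first lra.
  by move=> y Oy; rewrite uout // oppr0.
move=> y Oy; move: (uE _ Oy) (uK _ Oy); rewrite !ler_norml => /andP[? ?] /andP[? ?].
by apply/andP; split; lra.
Qed.

End positive_integrals.

Section holder.
Variable R : realType.

Lemma sup_ge0 (E : set R) : (forall x, E x -> 0 <= x) -> 0 <= sup E.
Proof.
move=> E0; case: (pselect (has_sup E)) => [[[x Ex] ubE]|/sup_out ->] //.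
exact: le_trans (E0 _ Ex) (ub_le_sup ubE Ex).
Qed.

Lemma ge0_ge_sup (E : set R) (X : R) : 0 <= X -> (forall x, E x -> x <= X) -> sup E <= X.
Proof.
move=> X0 EX; case: (pselect (E !=set0)) => [|E0]; first by move/ge_sup; apply.
suff -> : E = set0 by rewrite sup0.
by apply/seteqP; split => x // Ex; apply: E0; exists x.
Qed.

Lemma sup_abs_ge0 n (A : set 'rV[R]_n) phi : 0 <= sup_abs A phi.
Proof. by apply: sup_ge0 => _ [x _ <-]; exact: cabs_ge0. Qed.

Lemma holder_seminorm_ge0 n alpha (A : set 'rV[R]_n) phi : 0 <= holder_seminorm alpha A phi.
Proof. by apply: sup_ge0 => _ [x [y [_ _ _ ->]]]; rewrite divr_ge0 ?cabs_ge0 ?powR_ge0. Qed.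

Lemma holder_osc_le n alpha (A Om : set 'rV[R]_n) phi (M : R) : 0 <= alpha ->
  Om `<=` A -> (forall x, Om x -> enorm x <= M) ->
  has_ubound (holder_quotients alpha A phi) ->
  forall x y, Om x -> Om y ->
    cabs (phi y - phi x) <= holder_seminorm alpha A phi * diam Om `^ alpha.
Proof.
move=> a0 OmA OmM hH x y Ox Oy.
have [->|yx] := eqVneq y x.
  by rewrite subrr cabs0 mulr_ge0 ?powR_ge0 ?holder_seminorm_ge0.
have dyx : 0 < enorm (y - x).
  rewrite lt_def enorm_ge0 andbT; apply: contra_neq yx => /enorm_eq0 /eqP.
  by rewrite subr_eq0 => /eqP.
have q_le : cabs (phi y - phi x) / enorm (y - x) `^ alpha <= holder_seminorm alpha A phi.
  by apply: (ub_le_sup hH); exists y, x; split => //; [exact: OmA | exact: OmA | exact/eqP].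
rewrite ler_pdivrMr ?powR_gt0 // in q_le; apply: le_trans q_le _.
have yxd := enorm_sub_le_diam OmM Oy Ox.
rewrite ler_wpM2l ?holder_seminorm_ge0 // ge0_ler_powR ?nnegrE ?enorm_ge0 //.
exact: le_trans (enorm_ge0 _) yxd.
Qed.

Lemma cabs_le_closure n (Om : set 'rV[R]_n) phi (X : R) :
  (forall x, closure Om x -> forall eps : R, 0 < eps -> exists2 d : R, 0 < d &
      forall y, closure Om y -> enorm (y - x) < d -> cabs (phi y - phi x) < eps) ->
  (forall x, Om x -> cabs (phi x) <= X) ->
  forall x, closure Om x -> cabs (phi x) <= X.
Proof.
move=> phic OmX x Omx; apply/ler_addgt0Pr => eps eps0.
have [d d0 dphi] := phic x Omx eps eps0.
have n1 : 0 < n.+1%:R :> R by [].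
have rho0 : 0 < d / n.+1%:R by rewrite divr_gt0.
have [z [Oz /= xz]] := Omx _ (nbhsx_ballx x _ rho0).
have zxd : enorm (z - x) < d.
  apply: le_lt_trans (enorm_le_cube (ltW rho0) _) _.
    by move=> i; rewrite !mxE distrC; case: xz => _ /(_ ord0 i) /ltW.
  by rewrite -(mulr_natr (d / n.+1%:R) n) mulrAC ltr_pdivrMr // ltr_pM2l // ltr_nat.
have := ler_cabsD (phi z) (phi x - phi z); rewrite addrC subrK => le_x.
apply: le_trans le_x _; apply: lerD; first exact: OmX.
rewrite -[phi x - phi z]opprB; rewrite !cabsE normcN -cabsE; apply/ltW.
exact: dphi (subset_closure Oz) zxd.
Qed.

End holder.

Section farfield.
Variable R : realType.

Definition farfield_integrand n (k : R) (xhat : 'rV[R]_n) (Om : set 'rV[R]_n)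
    (phi : 'rV[R]_n -> R[i]) (y : 'rV[R]_n) : R[i] :=
  expi (- (k * dotv xhat y)) * source Om phi y.

Lemma radiationless_iint_ReIm n (k : R) Om phi (xhat : 'rV[R]_n) :
  0 < k -> radiationless k Om phi -> enorm xhat = 1 ->
  iint (fun y => complex.Re (farfield_integrand k xhat Om phi y)) = 0 /\
  iint (fun y => complex.Im (farfield_integrand k xhat Om phi y)) = 0.
Proof.
move=> k0 rad xhat1; have /eqP := rad xhat xhat1.
rewrite /farfield mulf_eq0 (negbTE (Cnk_neq0 n k0)) /= => /eqP I0.
have := congr1 (@complex.Re R) I0; have := congr1 (@complex.Im R) I0.
by rewrite /ciint /= !mul0r !mul1r ?subr0 ?addr0 ?add0r.
Qed.

Lemma farfield_integrand_osc n (k alpha M : R) (i : 'I_n) Om phi x y :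
  0 <= k -> 0 <= alpha -> (forall x, Om x -> enorm x <= M) ->
  has_ubound (holder_quotients alpha (closure Om) phi) -> Om x -> Om y ->
  cabs (farfield_integrand k (delta_mx ord0 i) Om phi y
        - farfield_integrand k (delta_mx ord0 i) Om phi x)
    <= holder_seminorm alpha (closure Om) phi * diam Om `^ alpha
       + (k * diam Om) *+ 2 * cabs (phi x).
Proof.
move=> k0 a0 OmM hH Ox Oy.
rewrite /farfield_integrand /source (asboolT Ox) (asboolT Oy).
rewrite !dotv_delta; set ex := expi (- (k * x ord0 i)); set ey := expi (- (k * y ord0 i)).
have -> : ey * phi y - ex * phi x = ey * (phi y - phi x) + (ey - ex) * phi x by ring.
apply: le_trans (ler_cabsD _ _) _; rewrite !cabsM cabs_expi mul1r.
apply: lerD; first by apply: (holder_osc_le a0 _ OmM hH Ox Oy); exact: subset_closure.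
apply: ler_wpM2r; first exact: cabs_ge0.
apply: le_trans (cabs_expiB _ _) _; rewrite ler_wMn2r //.
have -> : - (k * y ord0 i) - - (k * x ord0 i) = k * (x - y) ord0 i by rewrite !mxE; ring.
rewrite normrM ger0_norm // ler_wpM2l //.
exact: le_trans (coord_le_enorm _ i) (enorm_sub_le_diam OmM Ox Oy).
Qed.

Lemma radiationless_small_diam_le n (i : 'I_n) (k alpha : R) (Om : set 'rV[R]_n) phi M :
  0 < k -> 0 <= alpha -> open Om -> (forall x, Om x -> enorm x <= M) ->
  in_holder alpha (closure Om) phi -> radiationless k Om phi ->
  diam Om * k * 16 <= 1 -> forall x, closure Om x ->
  cabs (phi x) <= 8 * (holder_seminorm alpha (closure Om) phi * diam Om `^ alpha).
Proof.
move=> k0 a0 oOm OmM [phic phiK hH] rad small; apply: cabs_le_closure phic _ => x Ox.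
have [ReI ImI] := radiationless_iint_ReIm k0 rad (enorm_delta R i).
set F := farfield_integrand k (delta_mx ord0 i) Om phi in ReI ImI *.
set P := cabs (phi x); set d := diam Om in small *.
set E := holder_seminorm alpha (closure Om) phi * d `^ alpha + (k * d) *+ 2 * P.
have P0 : 0 <= P by exact: cabs_ge0.
have d0 : 0 <= d by apply: le_trans (enorm_sub_le_diam OmM Ox Ox); exact: enorm_ge0.
have Fin (y : 'rV_n) : Om y -> cabs (F y) = cabs (phi y).
  by move=> Oy; rewrite /F /farfield_integrand /source asboolT // cabsM cabs_expi mul1r.
have Fout (y : 'rV_n) : ~ Om y -> F y = 0.
  by move=> Oy; rewrite /F /farfield_integrand /source asboolF ?mulr0.
have FK (y : 'rV_n) : Om y -> cabs (F y) <= sup_abs (closure Om) phi.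
  move=> Oy; rewrite Fin //; apply: (ub_le_sup phiK).
  by exists y => //; exact: subset_closure.
have Fosc (y : 'rV_n) : Om y -> cabs (F y - F x) <= E.
  by move=> Oy; exact: farfield_integrand_osc (ltW k0) a0 OmM hH Ox Oy.
have Re_le : `|complex.Re (F x)| <= E.
  apply: (iint_eq0_le_osc oOm Ox OmM ReI); move=> y Oy.
  - by rewrite Fout.
  - exact: le_trans (Re_le_cabs _) (FK y Oy).
  - by rewrite -ReB; exact: le_trans (Re_le_cabs _) (Fosc y Oy).
have Im_le : `|complex.Im (F x)| <= E.
  apply: (iint_eq0_le_osc oOm Ox OmM ImI); move=> y Oy.
  - by rewrite Fout.
  - exact: le_trans (Im_le_cabs _) (FK y Oy).
  - by rewrite -ImB; exact: le_trans (Im_le_cabs _) (Fosc y Oy).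
have := cabs_le_ReIm (F x); rewrite Fin // -/P => PE.
move: Re_le Im_le; rewrite /E mulr2n => Re_le Im_le.
have : 0 <= (1 - d * k * 16) * P by rewrite mulr_ge0 // subr_ge0.
have := mulr_ge0 (holder_seminorm_ge0 alpha (closure Om) phi) (powR_ge0 d alpha).
nra.
Qed.

End farfield.

Section real_inequalities.
Variable R : realType.

Lemma min1_le_powR (d alpha : R) : 0 <= d -> 0 <= alpha <= 1 ->
  Num.min 1 d <= d `^ alpha.
Proof.
move=> d0 /andP[a0 a1]; case: (leP 1 d) => [d1|d1].
  by rewrite -(powRr0 d) ler_powR.
have [->|dpos] := eqVneq d 0; first exact: powR_ge0.
by rewrite ger1_powR // lt_def dpos d0 ltW.
Qed.

Lemma ge0_ler_divrMr (a b c : R) : 0 <= b -> 0 <= c -> a <= c * b -> a / b <= c.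
Proof.
move=> b0 c0 abc; have [->|bpos] := eqVneq b 0; first by rewrite invr0 mulr0.
by rewrite ler_pdivrMr // lt_def bpos.
Qed.

End real_inequalities.

Theorem corollary2p2 (R : realType) (n : nat) (k Rm : R) :
  (2 <= n)%N -> 0 < k -> 0 < Rm ->
  exists C : R, 0 < C /\
    forall (alpha : R) (Om : set 'rV[R]_n) (phi : 'rV[R]_n -> R[i]),
      0 <= alpha <= 1 ->
      bounded_lipschitz_domain Om ->
      diam Om <= Rm ->
      connected (~` Om) ->
      in_holder alpha (closure Om) phi ->
      radiationless k Om phi ->
      C * (sup_abs (closure Om `\` Om) phi / holder_norm alpha (closure Om) phi)
        <= diam Om `^ alpha.
Proof.
move=> n2 k0 _; pose i : 'I_n := Ordinal (ltnW n2).
pose C : R := Num.min (1 / 8) (1 / (16 * k)).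
have C0 : 0 < C by rewrite lt_min !divr_gt0 ?mulr_gt0.
have [C8 Ck] : C <= 1 / 8 /\ C <= 1 / (16 * k) by rewrite !ge_min !lexx orbT.
exists C; split => // alpha Om phi /andP[a0 a1] [oOm _ [x1 Ox1] [M OmM] _] _ _ hol rad.
have [_ phiK _] := hol.
set S := sup_abs _ phi; set K := sup_abs (closure Om) phi.
set Hs := holder_seminorm alpha (closure Om) phi; set d := diam Om.
have d0 : 0 <= d by apply: le_trans (enorm_sub_le_diam OmM Ox1 Ox1); exact: enorm_ge0.
have Hs0 : 0 <= Hs := holder_seminorm_ge0 alpha (closure Om) phi.
have K0 : 0 <= K := sup_abs_ge0 (closure Om) phi.
have q0 : 0 <= S / (K + Hs) by rewrite divr_ge0 ?addr_ge0 ?sup_abs_ge0.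
have S_le X : 0 <= X -> (forall x, closure Om x -> cabs (phi x) <= X) -> S <= X.
  by move=> X0 phiX; apply: ge0_ge_sup => // _ [x [Omx _] <-]; exact: phiX.
rewrite /holder_norm -/K -/Hs; have [small|large] := leP (d * k * 16) 1.
  have q8 : S / (K + Hs) <= 8 * d `^ alpha.
    apply: ge0_ler_divrMr; rewrite ?addr_ge0 ?mulr_ge0 ?powR_ge0 //.
    apply: S_le => [|x Ox]; first by rewrite !mulr_ge0 ?addr_ge0 ?powR_ge0.
    apply: le_trans (radiationless_small_diam_le i k0 a0 oOm OmM hol rad small Ox) _.
    by rewrite -mulrA ler_pM2l // [X in _ <= X]mulrC ler_wpM2r ?powR_ge0 // lerDr.
  by apply: le_trans (ler_pM (ltW C0) q0 C8 q8) _; lra.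
have q1 : S / (K + Hs) <= 1.
  apply: ge0_ler_divrMr; rewrite ?addr_ge0 // mul1r.
  apply: S_le; rewrite ?addr_ge0 // => x Omx.
  by rewrite -[cabs _]addr0 lerD //; apply: (ub_le_sup phiK); exists x.
have Cd : C <= d `^ alpha.
  apply: le_trans (min1_le_powR d0 _); last by rewrite a0 a1.
  rewrite le_min; apply/andP; split; first by apply: le_trans C8 _; lra.
  by apply: le_trans Ck _; rewrite ler_pdivrMr ?mulr_gt0 //; lra.
by apply: le_trans Cd; rewrite ger_pMr.
Qed.
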